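(* Let $M$ be a finite abelian group of even order and exponent greater than $2$, written as $M=C_{2i_1}\times\cdots\times C_{2i_s}\times M_1$ with $M_1$ of odd order, $s\geq 1$, and $i_j\geq 1$ for all $j$. Then $|\mathcal{H}_M|=4^s$.
   Context: $C_n$ denotes the cyclic group of order $n$. Let $K=\{1,a,b,c\}$ be the Klein four-group. Set $L_M=K\times M$ with the operation $(A,x)*(B,y)=(AB,xy)$ if $B=1$, and $(A,x)*(B,y)=(AB,x^{-1}y)$ if $B\neq 1$. Write $(1,M)=\{(1,x):x\in M\}$. Let $\mathcal{H}_M$ be the set of subloops $H$ of $L_M$ that are isomorphic to $K$ and satisfy $|H\cap(1,M)|=1$. *)

From mathcomp Require Import all_boot all_order all_fingroup all_solvable.
Set Implicit Arguments. Unset Strict Implicit. Unset Printing Implicit Defensive.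
Local Open Scope group_scope.

(* Klein four-group K = {1,a,b,c}, modelled as bool*bool with componentwise xor;
   1 = (false,false), a = (true,false), b = (false,true), c = (true,true). *)
Definition Ktype := (bool * bool)%type.
Definition K1 : Ktype := (false, false).
Definition Kmul (u v : Ktype) : Ktype := (xorb u.1 v.1, xorb u.2 v.2).

Section Loop.
Variable gT : finGroupType.

Definition Ltype := (Ktype * gT)%type.

Definition Lmul (p q : Ltype) : Ltype :=
  (Kmul p.1 q.1, if q.1 == K1 then p.2 * q.2 else p.2^-1 * q.2).

Definition is_subloop (H : {set Ltype}) : bool :=
  [&& H != set0,
      [forall x in H, forall y in H, Lmul x y \in H] &
      [forall x in H, forall y in H,
         [exists z in H, Lmul x z == y] && [exists w in H, Lmul w x == y]]].

Definition iso_to_K (H : {set Ltype}) : bool :=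
  [exists f : {ffun Ktype -> Ltype},
     [&& injectiveb f, f @: setT == H &
         [forall u, forall v, f (Kmul u v) == Lmul (f u) (f v)]]].

Definition oneM : {set Ltype} := [set p | p.1 == K1].

Definition HM : {set {set Ltype}} :=
  [set H | [&& is_subloop H, iso_to_K H & #|H :&: oneM| == 1%N]].

End Loop.

From mathcomp Require Import all_boot all_order all_fingroup all_solvable.
Set Implicit Arguments. Unset Strict Implicit. Unset Printing Implicit Defensive.
Local Open Scope group_scope.

(* An element of H_M meets (1, M) only in (1, 1), so its first projection is a
   bijection onto K: H is the graph of a map g : K -> M.  Closure under the loop
   product forces g(a) and g(b) to be involutions and g(c) = g(a) g(b), and
   conversely every such graph lies in H_M.  Hence |H_M| = |Omega|^2, where
   Omega = {x | x^2 = 1}.  This set is multiplicative over direct products, has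
   two elements in a cyclic group of even order and one in a group of odd order,
   so |Omega| = 2^s. *)

Section Ldiv.
Variable gT : finGroupType.
Implicit Types (A B G H : {group gT}) (n : nat).

Lemma Ldiv_dprod n A B G : A \x B = G -> 'Ldiv_n(A) * 'Ldiv_n(B) = 'Ldiv_n(G).
Proof.
move=> defG; have [_ defAB cAB tiAB] := dprodP defG.
apply/setP=> g; apply/mulsgP/LdivP => [[a b /LdivP[Aa an] /LdivP[Bb bn] ->{g}] | []].
  have cab : commute a b by apply/esym/(centsP cAB).
  by rewrite -defAB mem_mulg // expgMn // an bn mulg1.
rewrite -defAB => /mulsgP[a b Aa Bb ->{g}].
have cab : commute a b by apply/esym/(centsP cAB).
rewrite expgMn // => /(canRL (mulgK _)); rewrite mul1g => def_an.
have an : a ^+ n = 1.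
  have : a ^+ n \in A :&: B by rewrite inE groupX // def_an groupV groupX.
  by rewrite tiAB => /set1P.
by exists a b => //; apply/LdivP; split; last by apply: invg_inj; rewrite -def_an an invg1.
Qed.

Lemma TI_cardMs A B (X Y : {set gT}) :
  A :&: B = 1 -> X \subset A -> Y \subset B -> #|X * Y| = (#|X| * #|Y|)%N.
Proof.
move=> tiAB sXA sYB; rewrite -cardsX.
have -> : X * Y = [set p.1 * p.2 | p in setX X Y].
  apply/setP=> g; apply/mulsgP/imsetP => [[x y Xx Yy ->] | [[x y]]].
    by exists (x, y); rewrite ?inE ?Xx.
  by case/setXP=> Xx Yy ->; exists x y.
apply: card_in_imset => -[x1 y1] [x2 y2] /setXP[Xx1 Yy1] /setXP[Xx2 Yy2] /= eq_xy.
have: x2^-1 * x1 \in A :&: B.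
  rewrite inE groupM ?groupV ?(subsetP sXA) //=.
  rewrite -(mulgK y1 x1) mulgA eq_xy mulKg groupM ?groupV ?(subsetP sYB) //.
rewrite tiAB => /set1P/eqP; rewrite -eq_mulVg1 => /eqP eq_x.
by rewrite eq_x in eq_xy *; rewrite (mulgI _ _ _ eq_xy).
Qed.

Lemma card_Ldiv_dprod n (A B : {set gT}) G :
  A \x B = G -> (#|'Ldiv_n(A)| * #|'Ldiv_n(B)|)%N = #|'Ldiv_n(G)|.
Proof.
move=> defG; have [[HA HB eA eB] _ _ tiAB] := dprodP defG; subst A B.
by rewrite -(Ldiv_dprod n defG) (TI_cardMs tiAB) ?subsetIl.
Qed.

Lemma card_Ldiv_bigdprod n I r (P : pred I) (F : I -> {group gT}) G :
    \big[dprod/1]_(i <- r | P i) F i = G ->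
  (\prod_(i <- r | P i) #|'Ldiv_n(F i)|)%N = #|'Ldiv_n(G)|.
Proof.
elim/big_rec2: _ G => [G <- | i B H _ IH G defG].
  suff -> : 'Ldiv_n(1) = 1 :> {set gT} by rewrite cards1.
  by apply/eqP; rewrite eqEsubset subsetIl sub1set !inE expg1n eqxx.
have [[_ H' _ defH'] _ _ _] := dprodP defG.
by rewrite -(card_Ldiv_dprod n defG) (IH H' defH') defH'.
Qed.

Lemma Ldiv_coprime n H : coprime n #|H| -> 'Ldiv_n(H) = 1.
Proof.
move=> co_nH; apply/eqP; rewrite eqEsubset; apply/andP; split; last first.
  by apply/subsetP=> _ /set1P->; apply/LdivP; rewrite group1 expg1n.
apply/subsetP=> x /LdivP[Hx xn]; apply/set1P/eqP.
rewrite -order_eq1 -dvdn1 -(eqnP co_nH) dvdn_gcd order_dvdG // andbT.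
by rewrite order_dvdn xn.
Qed.

Lemma Ldiv_cycle n (g : gT) : n %| #[g] -> 'Ldiv_n(<[g]>) = <[g ^+ (#[g] %/ n)]>.
Proof.
move=> n_dv_g; have [n0 | n_gt0] := posnP n.
  by move: n_dv_g; rewrite n0 dvd0n; case: #[g] (order_gt0 g).
apply/setP=> x; apply/LdivP/cycleP => [[/cycleP[j ->] /eqP] | [k ->]].
  rewrite -expgM -order_dvdn -{1}(divnK n_dv_g) dvdn_pmul2r //.
  by case/dvdnP=> k ->; exists k; rewrite -expgM mulnC.
split; first by rewrite -expgM mem_cycle.
by rewrite -!expgM mulnCA divnK // mulnC expgM expg_order expg1n.
Qed.

Lemma card_Ldiv_cyclic n H : cyclic H -> n %| #|H| -> #|'Ldiv_n(H)| = n.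
Proof.
case/cyclicP=> g ->{H}; rewrite -orderE => n_dv_g.
by rewrite Ldiv_cycle // -orderE orderXdiv ?dvdn_div // divnA // mulKn.
Qed.
End Ldiv.

Lemma Kmul_self u : Kmul u u = K1. Proof. by case: u => [[] []]. Qed.
Lemma Kmul_eq1 u v : (Kmul u v == K1) = (u == v).
Proof. by case: u v => [[] []] [[] []]. Qed.
Lemma KmulKl u v : Kmul u (Kmul u v) = v. Proof. by case: u v => [[] []] [[] []]. Qed.
Lemma KmulKr u v : Kmul (Kmul v u) u = v. Proof. by case: u v => [[] []] [[] []]. Qed.

Section Graphs.
Variable gT : finGroupType.
Implicit Types (g : Ktype -> gT) (H : {set Ltype gT}).

Definition Kgraph g : {set Ltype gT} := [set (u, g u) | u : Ktype].

Lemma mem_Kgraph g u : (u, g u) \in Kgraph g. Proof. exact: imset_f. Qed.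

Lemma Kgraph_inj g1 g2 : Kgraph g1 = Kgraph g2 -> g1 =1 g2.
Proof.
move=> eq_g u; have : (u, g1 u) \in Kgraph g2 by rewrite -eq_g mem_Kgraph.
by case/imsetP=> _ _ [<-].
Qed.

Lemma Kgraph_closed_morph g :
    {in Kgraph g &, forall p q, Lmul p q \in Kgraph g} ->
  {morph (fun u => (u, g u)) : u v / Kmul u v >-> Lmul u v}.
Proof.
move=> closed_g u v; have /imsetP[w _ eq_w] := closed_g _ _ (mem_Kgraph g u) (mem_Kgraph g v).
by rewrite eq_w; move/(congr1 fst): eq_w => /= ->.
Qed.

Lemma morph_Kgraph1 g :
  {morph (fun u => (u, g u)) : u v / Kmul u v >-> Lmul u v} -> g K1 = 1.
Proof.
move=> gM; have /(congr1 snd) /= := gM K1 K1.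
by rewrite -{1}[g K1]mulg1 => /mulgI.
Qed.

Lemma Kgraph_HM g :
  {morph (fun u => (u, g u)) : u v / Kmul u v >-> Lmul u v} -> Kgraph g \in HM gT.
Proof.
move=> gM; rewrite inE; apply/and3P; split.
- apply/and3P; split.
  + by apply/set0Pn; exists (K1, g K1); apply: mem_Kgraph.
  + apply/forall_inP=> _ /imsetP[u _ ->]; apply/forall_inP=> _ /imsetP[v _ ->].
    by rewrite -gM mem_Kgraph.
  + apply/forall_inP=> _ /imsetP[u _ ->]; apply/forall_inP=> _ /imsetP[v _ ->].
    apply/andP; split; apply/exists_inP.
    * by exists (Kmul u v, g (Kmul u v)); rewrite ?mem_Kgraph // -gM KmulKl.
    * by exists (Kmul v u, g (Kmul v u)); rewrite ?mem_Kgraph // -gM KmulKr.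
- apply/existsP; exists [ffun u => (u, g u)]; apply/and3P; split.
  + by apply/injectiveP=> u v; rewrite !ffunE => -[].
  + by apply/eqP/setP=> p; apply/imsetP/imsetP=> -[u _ ->]; exists u; rewrite ?ffunE.
  + by apply/forallP=> u; apply/forallP=> v; rewrite !ffunE gM.
- apply/cards1P; exists (K1, 1); apply/setP=> p; rewrite !inE.
  apply/andP/eqP=> [[/imsetP[u _ ->] /= /eqP->] | ->]; first by rewrite (morph_Kgraph1 gM).
  by rewrite -(morph_Kgraph1 gM) mem_Kgraph.
Qed.

Lemma HM_closed H : H \in HM gT -> {in H &, forall p q, Lmul p q \in H}.
Proof.
by rewrite inE => /and3P[/and3P[_ /forall_inP closedH _] _ _] p q /closedH/forall_inP; apply.
Qed.

Lemma HM_Kgraph H : H \in HM gT -> exists g, H = Kgraph g.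
Proof.
rewrite inE => /and3P[_ /existsP[f /and3P[/injectiveP f_inj /eqP defH /forallP fM]]].
move/cards1P=> [p0 H1_p0].
have {}fM u v : f (Kmul u v) = Lmul (f u) (f v) by apply/eqP/(forallP (fM u)).
pose phi u := (f u).1.
have phiM u v : phi (Kmul u v) = Kmul (phi u) (phi v) by rewrite /phi fM.
have H1_f u : phi u = K1 -> f u = p0.
  by move=> phi_u; apply/set1P; rewrite -H1_p0 !inE -defH imset_f // -/(phi u) phi_u /=.
have phi1 : phi K1 = K1 by rewrite -{1}(Kmul_self K1) phiM Kmul_self.
have phi_inj : injective phi.
  move=> u v eq_phi; apply/eqP; rewrite -Kmul_eq1; apply/eqP/f_inj.
  by rewrite !H1_f // phiM eq_phi Kmul_self.
exists (fun w => (f (invF phi_inj w)).2); rewrite -defH.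
apply/setP=> p; apply/imsetP/imsetP=> [[u _ ->] | [w _ ->]].
  by exists (phi u); rewrite // invF_f -surjective_pairing.
by exists (invF phi_inj w); rewrite // [RHS]surjective_pairing -/(phi _) f_invF.
Qed.
End Graphs.

Section AbelianGraphs.
Variable gT : finGroupType.
Hypothesis cTT : abelian [set: gT].

Lemma commuteT (x y : gT) : commute x y.
Proof. exact: (centsP cTT) (in_setT x) y (in_setT y). Qed.

Definition Kmap (x y : gT) (u : Ktype) : gT := x ^+ u.1 * y ^+ u.2.

Lemma expg_xorb (x : gT) (a b : bool) :
  x ^+ 2 = 1 -> x ^+ xorb a b = x ^+ a * x ^+ b.
Proof. by move=> x2; case: a b => [] []; rewrite ?mulg1 ?mul1g // -x2. Qed.

Lemma expg2_inv (x : gT) : x ^+ 2 = 1 -> x^-1 = x.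
Proof. by move=> x2; apply/eqP; rewrite eq_invg_mul -x2 expgS expg1. Qed.

Section Involutions.
Variables x y : gT.
Hypotheses (x2 : x ^+ 2 = 1) (y2 : y ^+ 2 = 1).

Lemma Kmap2 u : Kmap x y u ^+ 2 = 1.
Proof.
by rewrite (expgMn _ (commuteT _ _)) (expgnAC x) (expgnAC y) x2 y2 !expg1n mulg1.
Qed.

Lemma KmapM u v : Kmap x y (Kmul u v) = Kmap x y u * Kmap x y v.
Proof.
rewrite /Kmap /= !expg_xorb // !mulgA; congr (_ * _).
by rewrite -!mulgA (commuteT (x ^+ v.1)).
Qed.

Lemma Kmap_morph : {morph (fun u => (u, Kmap x y u)) : u v / Kmul u v >-> Lmul u v}.
Proof. by move=> u v; rewrite /Lmul /= expg2_inv ?Kmap2 // if_same KmapM. Qed.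
End Involutions.

Lemma morph_Kgraph_Kmap (g : Ktype -> gT) :
    {morph (fun u => (u, g u)) : u v / Kmul u v >-> Lmul u v} ->
  exists x y, [/\ x ^+ 2 = 1, y ^+ 2 = 1 & g =1 Kmap x y].
Proof.
move=> gM; have gM2 u v : g (Kmul u v) = if v == K1 then g u * g v else (g u)^-1 * g v.
  by have /(congr1 snd) := gM u v.
have g1 : g (false, false) = 1 by apply: morph_Kgraph1 gM.
have gab := gM2 (true, false) (false, true).
have gba := gM2 (false, true) (true, false).
have gac := gM2 (true, false) (true, true).
rewrite /Kmul /= in gab gba gac.
(* In L_M, a.b and b.a give g c = x^-1 y = y^-1 x, and a.c = b gives y = x^-1 g c. *)
set x := g (true, false) in gab gba gac; set y := g (false, true) in gab gba gac.
have x2 : x ^+ 2 = 1.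
  have : x^-1 * x^-1 * y = 1 * y by rewrite -mulgA -gab -gac mul1g.
  by move/mulIg; rewrite -invMg -[x ^+ 2]invgK expgS expg1 => ->; rewrite invg1.
have y2 : y ^+ 2 = 1.
  move: gba; rewrite gab (expg2_inv x2) (commuteT x) => /mulIg y_inv.
  by rewrite expgS expg1 {1}y_inv mulVg.
exists x, y; split=> // -[[] []]; rewrite /Kmap /= ?expg1 ?expg0 ?mulg1 ?mul1g //.
by rewrite gab (expg2_inv x2).
Qed.

Lemma HM_Kmap H :
  H \in HM gT -> exists x y, [/\ x ^+ 2 = 1, y ^+ 2 = 1 & H = Kgraph (Kmap x y)].
Proof.
move=> HM_H; have [g defH] := HM_Kgraph HM_H.
have closed_g : {in Kgraph g &, forall p q, Lmul p q \in Kgraph g}.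
  by rewrite -defH; apply: HM_closed.
have gM := Kgraph_closed_morph closed_g.
have [x [y [x2 y2 gK]]] := morph_Kgraph_Kmap gM.
by exists x, y; split; rewrite // defH; apply: eq_imset => u; rewrite gK.
Qed.

Lemma card_HM : #|HM gT| = (#|'Ldiv_2([set: gT])| ^ 2)%N.
Proof.
set L2 := 'Ldiv_2([set: gT]).
have -> : HM gT = [set Kgraph (Kmap p.1 p.2) | p in setX L2 L2].
  apply/setP=> H; apply/idP/imsetP => [/HM_Kmap[x [y [x2 y2 ->]]] | ].
    by exists (x, y); rewrite // !inE /= x2 y2 eqxx.
  by case=> -[x y] /setXP[/LdivP[_ x2] /LdivP[_ y2]] ->; apply/Kgraph_HM/Kmap_morph.
rewrite card_in_imset ?cardsX ?mulnn // => -[x y] [x' y'] _ _ /Kgraph_inj eq_K.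
have := eq_K (true, false); have := eq_K (false, true).
by rewrite /Kmap /= !expg1 !expg0 !mulg1 !mul1g => -> ->.
Qed.
End AbelianGraphs.

Theorem corollary4p6 (gT : finGroupType) (s : nat) (i : 'I_s -> nat)
    (C : 'I_s -> {group gT}) (M1 : {group gT}) :
  abelian [set: gT] ->
  ~~ odd #|[set: gT]| ->
  (2 < exponent [set: gT])%N ->
  (0 < s)%N ->
  (forall j, 0 < i j)%N ->
  (forall j, cyclic (C j) /\ #|C j| = (2 * i j)%N) ->
  odd #|M1| ->
  dprod (\big[dprod/1]_(j < s) C j) M1 = [set: gT] ->
  #|HM gT| = (4 ^ s)%N.
Proof.
move=> cTT _ _ _ _ C_cyc oddM1 defT.
have [[P _ defP _] _ _ _] := dprodP defT.
rewrite card_HM // -(card_Ldiv_dprod 2 defT) Ldiv_coprime ?coprime2n // cards1 muln1.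
rewrite defP -(card_Ldiv_bigdprod 2 defP) (eq_bigr (fun=> 2%N)) => [|j _].
  by rewrite prod_nat_const card_ord -expnM mulnC expnM.
by have [cycCj oCj] := C_cyc j; rewrite card_Ldiv_cyclic // oCj dvdn_mulr.
Qed.
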